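(* For $d\ge2$, $V^{(1)}_{d-1}=\{v\in V_{d-1}:\alpha_{d-1}(v)=\mathrm{id}\}$ and $V^{(2)}_{d-1}=\{v\in V_{d-1}:\alpha_{0X^{d-2}}(v)=\alpha_{1X^{d-2}}(v)=\mathrm{id}\}$.
   Context: Let $X=\{0,1\}$, $G(d)$ the automorphism group of the finite binary rooted tree of words of length $\le d$; finite sections $g(wv)=g(w)g_w(v)$. $C_2=\{\mathrm{id},\sigma\}$ written additively; $\alpha(g)=\sigma$ if $g(0)=1$ and $\mathrm{id}$ otherwise; $\alpha_{(w)}(g)=\alpha(g_w)$; for finite $S$, $\alpha_S(g)=\sum_{w\in S}\alpha_{(w)}(g)$; $\alpha_k=\alpha_{X^k}$ with $X^k$ the words of length $k$; $xX^k=\{xw:w\in X^k\}$. $V_{d-1}=G(d)_{d-1}$ is the level-$(d-1)$ stabilizer of $G(d)$; $V^{(0)}_{d-1}=V_{d-1}$ and $V^{(i+1)}_{d-1}=[G(d),V^{(i)}_{d-1}]$. *)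

From HB Require Import structures.
From mathcomp Require Import all_boot all_fingroup.
Set Implicit Arguments. Unset Strict Implicit. Unset Printing Implicit Defensive.

(* Words over X = {0,1}, encoded as seq bool with 0 = false, 1 = true. *)

Fixpoint words (n : nat) : seq (seq bool) :=
  if n is n'.+1 then [::] :: [seq b :: w | b <- [:: false; true], w <- words n']
  else [:: [::]].

Definition lev (k : nat) : seq (seq bool) := [seq w <- words k | size w == k].

Definition xlev (x : bool) (k : nat) : seq (seq bool) := map (cons x) (lev k).

(* Vertices of the finite binary rooted tree of depth d. *)
Definition vert (d : nat) := seq_sub (words d).

Definition root (d : nat) : vert d := @SeqSub _ (words d) [::]
  (match d return [::] \in words d with 0 => mem_head _ _ | _.+1 => mem_head _ _ end).

Definition child (d : nat) (u v : vert d) : bool :=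
  [exists b : bool, val v == rcons (val u) b].

Definition G (d : nat) : {set {perm vert d}} :=
  [set g : {perm vert d} | (g (root d) == root d) &&
     [forall u, forall v, child (g u) (g v) == child u v]].

(* action of g on words (identity outside the tree) *)
Definition act (d : nat) (g : {perm vert d}) (s : seq bool) : seq bool :=
  match @insub _ (fun x => x \in words d) (vert d) s with
  | Some w => val (g w) | None => s end.

(* section g_w : g(wv) = g(w) g_w(v) *)
Definition section (d : nat) (g : {perm vert d}) (w : seq bool) : seq bool -> seq bool :=
  fun v => drop (size w) (act g (w ++ v)).

(* alpha(h) = sigma (true) iff h(0) = 1; C_2 = (bool, addb), id = false *)
Definition alpha (h : seq bool -> seq bool) : bool := h [:: false] == [:: true].

Definition alpha_w (d : nat) (w : seq bool) (g : {perm vert d}) : bool :=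
  alpha (section g w).

Definition alpha_S (d : nat) (S : seq (seq bool)) (g : {perm vert d}) : bool :=
  \big[addb/false]_(w <- S) alpha_w w g.

Definition Vlev (d : nat) : {set {perm vert d}} :=
  [set g in G d | [forall w : vert d, (size (val w) == d.-1) ==> (g w == w)]].

Definition Vder (d i : nat) : {set {perm vert d}} :=
  iter i (fun H => [~: G d, H]%g) (Vlev d).

From mathcomp Require Import all_boot all_fingroup.
Set Implicit Arguments. Unset Strict Implicit. Unset Printing Implicit Defensive.

(* An element v of V = V_{d-1} only swaps the children of vertices w of length
   d-1, so it is determined by the labels f w = alpha_(w)(v) on X^{d-1}, and V
   is elementary abelian.  Conjugation by g in G(d) transports the labels along
   g, so [g, v] has labels f o g^-1 + f.  Since g permutes X^{d-1}, and either
   fixes or exchanges the halves 0X^{d-2} and 1X^{d-2}, the labels of [g, v]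
   have even sum, and even sums on both halves when those of v have even sum.
   Conversely, the label functions with even sum are sums of the
   delta_x + delta_{0...0}, each the labels of a commutator [g, v] with g
   moving 0...0 to x; those with even sums on both halves are sums of the
   delta_{hy} + delta_{h0...0}, each the labels of [g, v'] with v' in V^{(1)}
   labelled delta_{00...0} + delta_{10...0} and g moving h0...0 to hy inside
   its half while fixing the other half. *)

Lemma mem_cons_map (c b : bool) s t :
  (b :: s \in [seq c :: w | w <- t]) = (b == c) && (s \in t).
Proof.
case: eqP => [->|neq]; last by apply/mapP => -[x _ []].
by rewrite (mem_map (fun x y => @congr1 _ _ behead (c :: x) (c :: y))).
Qed.

Lemma mem_words d s : (s \in words d) = (size s <= d).
Proof.
elim: d s => [|d IH] [|b s] //=.
by rewrite inE /= cats0 mem_cat !mem_cons_map IH ltnS; case: b; rewrite ?orbF.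
Qed.

Lemma uniq_words d : uniq (words d).
Proof.
elim: d => [|d IH] //=.
have cons_uniq (c : bool) : uniq [seq c :: w | w <- words d].
  by rewrite map_inj_uniq // => x y [].
rewrite cats0 mem_cat cat_uniq !cons_uniq andbT /=.
apply/andP; split; first by apply/orP => -[] /mapP [].
by apply/hasPn => _ /mapP [x _ ->]; rewrite mem_cons_map.
Qed.

Lemma mem_lev k s : (s \in lev k) = (size s == k).
Proof. by rewrite mem_filter mem_words andb_idr // => /eqP ->. Qed.

Lemma uniq_lev k : uniq (lev k).
Proof. exact/filter_uniq/uniq_words. Qed.

Lemma mem_xlev b k s : (s \in xlev b k) = (size s == k.+1) && (head false s == b).
Proof.
case: s => [|c s] /=; first by apply/mapP => -[].
apply/mapP/idP => [[x Hx [-> ->]]|/andP[Hs /eqP ->]].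
  by rewrite eqSS -mem_lev Hx eqxx.
by exists s; rewrite ?mem_lev.
Qed.

Lemma uniq_xlev b k : uniq (xlev b k).
Proof. by rewrite map_inj_uniq ?uniq_lev // => x y []. Qed.

Lemma perm_lev_xlev k : perm_eq (lev k.+1) (xlev false k ++ xlev true k).
Proof.
apply: uniq_perm; rewrite ?uniq_lev ?cat_uniq ?uniq_xlev //=.
  by rewrite andbT; apply/hasPn => s; rewrite !mem_xlev => /andP[_ /eqP ->]; rewrite andbF.
move=> s; rewrite mem_cat !mem_xlev mem_lev.
by case: (head false s); rewrite /= ?andbT ?andbF ?orbF.
Qed.

(* The letter following a prefix u is toggled iff [P u]. *)
Fixpoint flip (P : seq bool -> bool) (x : seq bool) : seq bool :=
  if x is c :: s then (c (+) P [::]) :: flip (fun u => P (c :: u)) s else [::].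

Lemma size_flip P x : size (flip P x) = size x.
Proof. by elim: x P => [|c x IH] P //=; rewrite IH. Qed.

Lemma flip_rcons P u b : flip P (rcons u b) = rcons (flip P u) (b (+) P u).
Proof. by elim: u P => [|c u IH] P //=; rewrite IH. Qed.

Lemma flipK P : (forall u, P (flip P u) = P u) -> involutive (flip P).
Proof.
move=> P_flip; elim/last_ind => [|u b IH] //.
by rewrite !flip_rcons IH P_flip -addbA addbb addbF.
Qed.

Lemma flip_false s : flip (fun _ => false) s = s.
Proof. by elim: s => //= b s ->; rewrite addbF. Qed.

Definition level_rule (c u : seq bool) : bool := nth false c (size u).

Lemma level_rule_flip c u : level_rule c (flip (level_rule c) u) = level_rule c u.
Proof. by rewrite /level_rule size_flip. Qed.

Lemma flip_level_rule c : flip (level_rule c) (nseq (size c) false) = c.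
Proof. by elim: c => //= c0 c IH; congr (_ :: _); exact: IH. Qed.

Definition branch_rule (h : bool) (y u : seq bool) : bool :=
  if u is b :: t then (b == h) && nth false y (size t) else false.

Lemma branch_rule_flip h y u : branch_rule h y (flip (branch_rule h y) u) = branch_rule h y u.
Proof. by case: u => //= b t; rewrite addbF size_flip. Qed.

Lemma flip_branch_rule h y b s :
  flip (branch_rule h y) (b :: s) = b :: (if b == h then flip (level_rule y) s else s).
Proof. by rewrite /= addbF; case: (b == h); rewrite ?flip_false. Qed.

Section TreeAutomorphisms.
Variable d : nat.
Local Open Scope group_scope.
Implicit Types (g h : {perm vert d}) (x : vert d).

Definition vert_of (s : seq bool) : vert d := insubd (root d) s.

Lemma val_vert_of s : s \in words d -> val (vert_of s) = s.
Proof. by move=> Hs; rewrite val_insubd Hs. Qed.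

Lemma act_val g x : act g (val x) = val (g x).
Proof. by rewrite /act valK. Qed.

Lemma act_notin g s : s \notin words d -> act g s = s.
Proof. by move=> Hs; rewrite /act insubF //; apply/negbTE. Qed.

Lemma act_vert_of g s : s \in words d -> act g s = val (g (vert_of s)).
Proof. by move=> Hs; rewrite -act_val val_vert_of. Qed.

Lemma actM g h s : act (g * h) s = act h (act g s).
Proof.
have [Hs|Hs] := boolP (s \in words d); last by rewrite !act_notin.
by rewrite !(act_vert_of _ Hs) act_val permM.
Qed.

Lemma act1 s : act (1 : {perm vert d}) s = s.
Proof. by rewrite /act; case: insubP => // x _ <-; rewrite perm1. Qed.

Lemma actK g : cancel (act g) (act g^-1).
Proof. by move=> s; rewrite -actM mulgV act1. Qed.

Lemma actKV g : cancel (act g^-1) (act g).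
Proof. by move=> s; have := actK g^-1 s; rewrite invgK. Qed.

Lemma act_inj g : injective (act g).
Proof. exact: can_inj (actK g). Qed.

Lemma actV_eq g s t : (act g^-1 s == t) = (s == act g t).
Proof. by apply/eqP/eqP => [<-|->]; rewrite ?actKV ?actK. Qed.

Section FlipPerm.
Variables (P : seq bool -> bool) (P_flip : forall u, P (flip P u) = P u).

Definition flip_vert x : vert d := insubd x (flip P (val x)).

Lemma val_flip_vert x : val (flip_vert x) = flip P (val x).
Proof. by rewrite val_insubd mem_words size_flip -mem_words (valP x). Qed.

Lemma flip_vertK : involutive flip_vert.
Proof. by move=> x; apply: val_inj; rewrite !val_flip_vert flipK. Qed.

Definition flip_perm : {perm vert d} := perm (inv_inj flip_vertK).

Lemma act_flip_perm s : s \in words d -> act flip_perm s = flip P s.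
Proof. by move=> Hs; rewrite act_vert_of // permE val_flip_vert val_vert_of. Qed.

Lemma flip_perm_in_G : flip_perm \in G d.
Proof.
rewrite inE; apply/andP; split; first by apply/eqP/val_inj; rewrite permE val_flip_vert.
apply/forallP => u; apply/forallP => v; apply/eqP.
rewrite /child !permE !val_flip_vert; apply/existsP/existsP => -[b /eqP Hb].
  exists (b (+) P (flip P (val u))); apply/eqP.
  by rewrite -(flipK P_flip (val v)) Hb flip_rcons flipK.
by exists (b (+) P (val u)); rewrite Hb flip_rcons.
Qed.

End FlipPerm.

Lemma G_group_set : group_set (G d).
Proof.
apply/group_setP; split.
  by rewrite inE perm1 eqxx /=; apply/forallP => u; apply/forallP => v; rewrite !perm1.
move=> g h; rewrite !inE => /andP[/eqP g1 /forallP gc] /andP[/eqP h1 /forallP hc].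
rewrite permM g1 h1 eqxx /=; apply/forallP => u; apply/forallP => v.
by rewrite !permM (eqP (forallP (hc (g u)) (g v))); exact: forallP (gc u) v.
Qed.

Canonical G_group := Group G_group_set.

Lemma act_nil g : g \in G d -> act g [::] = [::].
Proof. by rewrite inE -[[::]]/(val (root d)) act_val => /andP[/eqP ->]. Qed.

Lemma G_child g u v : g \in G d -> child (g u) (g v) = child u v.
Proof. by rewrite inE => /andP[_ /forallP /(_ u) /forallP /(_ v) /eqP]. Qed.

Definition swaps g (u : seq bool) : bool := last false (act g (rcons u false)).

Lemma act_rcons g u b : g \in G d -> size u < d ->
  act g (rcons u b) = rcons (act g u) (b (+) swaps g u).
Proof.
move=> Gg Hu.
have act_child c : exists c', act g (rcons u c) = rcons (act g u) c'.
  have Hu' : u \in words d by rewrite mem_words ltnW.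
  have Huc : rcons u c \in words d by rewrite mem_words size_rcons.
  have : child (vert_of u) (vert_of (rcons u c)).
    by apply/existsP; exists c; rewrite !val_vert_of.
  rewrite -(G_child _ _ Gg) => /existsP [c' /eqP Hc']; exists c'.
  by rewrite !act_vert_of.
have [b0 E0] := act_child false; have [b1 E1] := act_child true.
have b01 : b0 != b1.
  apply/eqP => eb; have /eqP := act_inj (etrans E0 (etrans (congr1 _ eb) (esym E1))).
  by rewrite eqseq_rcons andbF.
have -> : swaps g u = b0 by rewrite /swaps E0 last_rcons.
case: b; rewrite ?E0 ?E1 //; congr rcons.
by move: b01; case: (b0); case: (b1).
Qed.

Lemma size_act g s : g \in G d -> size (act g s) = size s.
Proof.
move=> Gg; elim/last_ind: s => [|u b IH]; first by rewrite act_nil.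
have [Hs|Hs] := boolP (rcons u b \in words d); last by rewrite act_notin.
by rewrite act_rcons // ?size_rcons ?IH // -(size_rcons u b) -mem_words.
Qed.

Lemma take_act g s k : g \in G d -> s \in words d ->
  take k (act g s) = act g (take k s).
Proof.
move=> Gg; elim/last_ind: s => [|u b IH] Hs; first by rewrite act_nil.
have Hu : size u < d by rewrite -(size_rcons u b) -mem_words.
rewrite act_rcons // -!cats1 !take_cat size_act //.
case: ltnP => Hk; first by rewrite IH // mem_words ltnW.
by case: (k - size u) => [|j] /=; rewrite ?cats0 ?cats1 -?act_rcons.
Qed.

Lemma alpha_w_swaps g w : g \in G d -> size w < d -> alpha_w w g = swaps g w.
Proof.
move=> Gg Hw; rewrite /alpha_w /alpha /section cats1 act_rcons // -cats1.
by rewrite -(size_act w Gg) drop_size_cat //; case: (swaps g w).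
Qed.

Lemma swapsV g w : g \in G d -> size w < d -> swaps g^-1 w = swaps g (act g^-1 w).
Proof.
move=> Gg Hw; have Gg' : g^-1 \in G d by rewrite groupV.
have := actKV g (rcons w false).
rewrite (act_rcons false Gg' Hw) (act_rcons _ Gg) ?size_act // actKV.
by move/eqP; rewrite eqseq_rcons eqxx /=; case: (swaps _ w); case: (swaps g _).
Qed.

Lemma head_act g s : g \in G d -> s \in words d -> 0 < size s ->
  head false (act g s) = head false s (+) swaps g [::].
Proof.
move=> Gg; case: s => [|c t] // Hs _.
have d0 : 0 < d by move: Hs; rewrite mem_words; exact: leq_trans.
have := take_act 1%N Gg Hs; rewrite /= take0 -[[:: c]]/(rcons [::] c) act_rcons //.
by rewrite act_nil //; case: (act g (c :: t)) => //= ? ? [->].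
Qed.

Lemma perm_act_lev g k : g \in G d -> perm_eq (map (act g) (lev k)) (lev k).
Proof.
move=> Gg; apply: uniq_perm; rewrite ?uniq_lev ?(map_inj_uniq (@act_inj g)) ?uniq_lev //.
move=> s; rewrite -{1}(actKV g s) (mem_map (@act_inj g)) !mem_lev size_act //.
by rewrite groupV.
Qed.

Lemma perm_act_xlev g b k : g \in G d -> k < d ->
  perm_eq (map (act g) (xlev b k)) (xlev (b (+) swaps g^-1 [::]) k).
Proof.
move=> Gg kd; have Gg' : g^-1 \in G d by rewrite groupV.
apply: uniq_perm; rewrite ?uniq_xlev ?(map_inj_uniq (@act_inj g)) ?uniq_xlev //.
move=> s; rewrite -{1}(actKV g s) (mem_map (@act_inj g)) !mem_xlev size_act //.
case: eqP => //= sk; rewrite head_act ?mem_words ?sk //.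
by case: b; case: (head false s); case: (swaps _ _).
Qed.

Definition level_perm c : {perm vert d} := flip_perm (level_rule_flip c).

Lemma act_level_perm c : size c <= d -> act (level_perm c) (nseq (size c) false) = c.
Proof. by move=> cd; rewrite act_flip_perm ?mem_words ?size_nseq ?flip_level_rule. Qed.

Definition branch_perm (h : bool) y : {perm vert d} := flip_perm (branch_rule_flip h y).

Lemma act_branch_perm (h b : bool) y s : size s < d ->
  act (branch_perm h y) (b :: s) = b :: (if b == h then flip (level_rule y) s else s).
Proof. by move=> sd; rewrite act_flip_perm ?mem_words ?flip_branch_rule. Qed.

End TreeAutomorphisms.

Section LeafPerm.
Variable n : nat.
Local Open Scope group_scope.
Local Notation d := n.+1.
Implicit Types (g v : {perm vert d}) (f : seq bool -> bool).

Lemma eq_G_leaves g h : g \in G d -> h \in G d ->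
  (forall w b, size w = n -> act g (rcons w b) = act h (rcons w b)) -> g = h.
Proof.
move=> Gg Gh gh; apply/permP => x; apply/val_inj; rewrite -!act_val.
set t := val x ++ nseq (d - size (val x)) false.
have xd : size (val x) <= d by rewrite -mem_words (valP x).
have tw : t \in words d by rewrite mem_words size_cat size_nseq subnKC.
have ts : size t = n.+1 by rewrite size_cat size_nseq subnKC.
have -> : val x = take (size (val x)) t by rewrite take_size_cat.
rewrite -!take_act //; clearbody t.
by case/lastP: t ts {tw} => // w b; rewrite size_rcons => -[/gh ->].
Qed.

Definition leaf_rule f u : bool := (size u == n) && f u.

Lemma flip_leaf_rule_small f s : size s <= n -> flip (leaf_rule f) s = s.
Proof.
elim/last_ind: s => [|u b IH] //; rewrite size_rcons => Hu.
by rewrite flip_rcons IH ?(ltnW Hu) // /leaf_rule (ltn_eqF Hu) addbF.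
Qed.

Lemma leaf_rule_flip f u : leaf_rule f (flip (leaf_rule f) u) = leaf_rule f u.
Proof.
rewrite /leaf_rule size_flip; case: eqP => // Hu.
by rewrite flip_leaf_rule_small ?Hu.
Qed.

Definition leaf_perm f : {perm vert d} := flip_perm d (leaf_rule_flip f).

Lemma leaf_perm_G f : leaf_perm f \in G d.
Proof. exact: flip_perm_in_G. Qed.

Lemma act_leaf_perm_small f s : size s <= n -> act (leaf_perm f) s = s.
Proof.
by move=> Hs; rewrite act_flip_perm ?flip_leaf_rule_small // mem_words ltnW.
Qed.

Lemma act_leaf_perm f w b : size w = n ->
  act (leaf_perm f) (rcons w b) = rcons w (b (+) f w).
Proof.
move=> Hw; rewrite act_flip_perm ?mem_words ?size_rcons ?Hw //.
by rewrite flip_rcons flip_leaf_rule_small ?Hw // /leaf_rule Hw eqxx.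
Qed.

Lemma eq_leaf_perm f f' : (forall w, size w = n -> f w = f' w) -> leaf_perm f = leaf_perm f'.
Proof.
move=> ff'; apply: eq_G_leaves; rewrite ?leaf_perm_G // => w b Hw.
by rewrite !act_leaf_perm // ff'.
Qed.

Lemma leaf_permD f f' : leaf_perm f * leaf_perm f' = leaf_perm (fun w => f w (+) f' w).
Proof.
apply: eq_G_leaves; rewrite ?groupM ?leaf_perm_G // => w b Hw.
by rewrite actM !act_leaf_perm // addbA.
Qed.

Lemma leaf_perm0 : leaf_perm (fun _ => false) = 1.
Proof.
apply: eq_G_leaves; rewrite ?group1 ?leaf_perm_G // => w b Hw.
by rewrite act_leaf_perm // addbF act1.
Qed.

Lemma leaf_permV f : (leaf_perm f)^-1 = leaf_perm f.
Proof.
apply: (mulgI (leaf_perm f)); rewrite mulgV leaf_permD -leaf_perm0.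
by apply: eq_leaf_perm => w _; rewrite addbb.
Qed.

Lemma leaf_perm_sum (I : Type) (s : seq I) (F : I -> seq bool -> bool) :
  leaf_perm (fun w => \big[addb/false]_(i <- s) F i w) = \prod_(i <- s) leaf_perm (F i).
Proof.
elim: s => [|i s IH].
  by rewrite big_nil -leaf_perm0; apply: eq_leaf_perm => w _; rewrite big_nil.
rewrite big_cons -IH leaf_permD; apply: eq_leaf_perm => w _.
by rewrite big_cons.
Qed.

Lemma Vlev_G v : v \in Vlev d -> v \in G d.
Proof. by rewrite inE => /andP[]. Qed.

Lemma leaf_perm_Vlev f : leaf_perm f \in Vlev d.
Proof.
rewrite inE leaf_perm_G /=; apply/forallP => w; apply/implyP => /eqP Hw.
by have := act_leaf_perm_small f (eq_leq Hw); rewrite act_val => /val_inj ->.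
Qed.

Lemma act_Vlev v w : v \in Vlev d -> size w = n -> act v w = w.
Proof.
rewrite inE => /andP[_ /forallP Hv] Hw.
have Hww : w \in words d by rewrite mem_words Hw.
move: (Hv (vert_of d w)); rewrite val_vert_of // Hw eqxx /= => /eqP vw.
by rewrite act_vert_of // vw val_vert_of.
Qed.

Lemma Vlev_leaf_perm v : v \in Vlev d -> v = leaf_perm (fun w => alpha_w w v).
Proof.
move=> Vv; apply: (eq_G_leaves (Vlev_G Vv) (leaf_perm_G _)) => w b Hw.
by rewrite act_leaf_perm // act_rcons ?Vlev_G ?Hw // act_Vlev // alpha_w_swaps ?Vlev_G ?Hw.
Qed.

Lemma alpha_S_leaf_perm S f : all (fun w => size w == n) S ->
  alpha_S S (leaf_perm f) = \big[addb/false]_(w <- S) f w.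
Proof.
move=> /allP HS; apply: eq_big_seq => w /HS /eqP Hw.
rewrite alpha_w_swaps ?leaf_perm_G ?Hw // /swaps act_leaf_perm //.
by rewrite last_rcons.
Qed.

Lemma conjg_leaf_perm g f : g \in G d ->
  leaf_perm f ^ g = leaf_perm (fun w => f (act g^-1 w)).
Proof.
move=> Gg; have Gg' : g^-1 \in G d by rewrite groupV.
apply: eq_G_leaves; rewrite ?groupJ ?leaf_perm_G // => w b Hw.
have Hw' : size (act g^-1 w) = n by rewrite size_act.
rewrite conjgE !actM act_rcons ?Hw // act_leaf_perm // act_rcons ?Hw' // actKV.
by rewrite swapsV ?Hw // act_leaf_perm // addbAC addbK.
Qed.

Lemma commg_leaf_perm g f : g \in G d ->
  [~ g, leaf_perm f] = leaf_perm (fun w => f (act g^-1 w) (+) f w).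
Proof. by move=> Gg; rewrite commgEr leaf_permV conjg_leaf_perm // leaf_permD. Qed.

Lemma lev_leaves : all (fun w => size w == n) (lev n).
Proof. by apply/allP => w; rewrite mem_lev. Qed.

(* If every fibre of r on X^n has even f-sum, then on the leaves
   f = \sum_x f x (delta_x + delta_{r x}). *)
Lemma leaf_perm_in_group (K : {group {perm vert d}}) (r : seq bool -> seq bool) f :
  (forall x, size x = n -> leaf_perm (fun w => (w == x) (+) (w == r x)) \in K) ->
  (forall w, size w = n -> \big[addb/false]_(x <- lev n | r x == w) f x = false) ->
  leaf_perm f \in K.
Proof.
move=> K_pair even_fibres.
have -> : leaf_perm f =
    leaf_perm (fun w => \big[addb/false]_(x <- lev n) (f x && (w == x) (+) f x && (w == r x))).
  apply: eq_leaf_perm => w wn.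
  rewrite big_split /= (bigD1_seq w) ?mem_lev ?wn ?uniq_lev //= eqxx andbT.
  rewrite big1 => [|x]; last by rewrite eq_sym => /negbTE ->; rewrite andbF.
  suff -> : \big[addb/false]_(x <- lev n) (f x && (w == r x)) = false by rewrite !addbF.
  rewrite -[RHS](even_fibres w wn); elim: (lev n) => [|x s IH]; rewrite ?big_nil //.
  by rewrite !big_cons IH eq_sym; case: (r x == w); rewrite ?andbT ?andbF.
rewrite leaf_perm_sum big_seq; apply: group_prod => x; rewrite mem_lev => /eqP xn.
by case: (f x) => /=; [exact: K_pair | rewrite leaf_perm0 group1].
Qed.

Definition alpha_ker (S : seq (seq bool)) : {set {perm vert d}} :=
  [set v in Vlev d | alpha_S S v == false].

Lemma leaf_perm_alpha_ker S f : all (fun w => size w == n) S ->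
  (leaf_perm f \in alpha_ker S) = (\big[addb/false]_(w <- S) f w == false).
Proof. by move=> HS; rewrite inE leaf_perm_Vlev alpha_S_leaf_perm. Qed.

Lemma alpha_ker_group_set S : all (fun w => size w == n) S -> group_set (alpha_ker S).
Proof.
move=> HS; apply/group_setP; split.
  by rewrite -leaf_perm0 leaf_perm_alpha_ker // big1.
move=> u v uK vK.
have [Vu Vv] : u \in Vlev d /\ v \in Vlev d.
  by move: uK vK; rewrite !inE => /andP[-> _] /andP[-> _].
move: uK vK; rewrite (Vlev_leaf_perm Vu) (Vlev_leaf_perm Vv) leaf_permD.
by rewrite !leaf_perm_alpha_ker // big_split => /eqP -> /eqP ->.
Qed.

Lemma commg_sub_alpha_ker (A : {set {perm vert d}}) S :
  all (fun w => size w == n) S -> A \subset Vlev d ->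
  (forall g f, g \in G d -> leaf_perm f \in A ->
     \big[addb/false]_(w <- S) f (act g^-1 w) = \big[addb/false]_(w <- S) f w) ->
  [~: G d, A] \subset alpha_ker S.
Proof.
move=> HS AV invariant.
suff : [~: G d, A] \subset Group (alpha_ker_group_set HS) by [].
rewrite gen_subG; apply/subsetP => _ /imset2P [g v Gg Av ->].
have Vv : v \in Vlev d by exact: subsetP AV v Av.
rewrite (Vlev_leaf_perm Vv) in Av *.
by rewrite /= commg_leaf_perm // leaf_perm_alpha_ker // big_split /= (invariant g _ Gg Av) addbb.
Qed.

Lemma commg_level_pair x : size x = n ->
  leaf_perm (fun w => (w == x) (+) (w == nseq n false)) \in [~: G d, Vlev d].
Proof.
move=> xn; have level_G : level_perm d x \in G d by exact: flip_perm_in_G.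
suff -> : leaf_perm (fun w => (w == x) (+) (w == nseq n false)) =
          [~ level_perm d x, leaf_perm (fun w => w == nseq n false)].
  exact: mem_commg level_G (leaf_perm_Vlev _).
rewrite commg_leaf_perm //; apply: eq_leaf_perm => w _.
by rewrite actV_eq -xn act_level_perm // xn.
Qed.

Lemma commg_G_VlevE : [~: G d, Vlev d] = alpha_ker (lev n).
Proof.
apply/eqP; rewrite eqEsubset; apply/andP; split.
  apply: commg_sub_alpha_ker lev_leaves (subxx _) _ => g f Gg _.
  by rewrite -(big_map (act g^-1) predT f) (perm_big _ (perm_act_lev _ (groupVr Gg))).
apply/subsetP => v vK.
have Vv : v \in Vlev d by move: vK; rewrite inE => /andP[].
move: vK; rewrite (Vlev_leaf_perm Vv) leaf_perm_alpha_ker ?lev_leaves // => /eqP even.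
apply: (leaf_perm_in_group (r := fun _ => nseq n false)) => [x|w _].
  exact: commg_level_pair.
by case: eqP => _; rewrite ?even ?big_pred0_eq.
Qed.

End LeafPerm.

Section SecondDerived.
Variable m : nat.
Local Open Scope group_scope.
Local Notation n := m.+1.
Local Notation d := m.+2.

Lemma xlev_leaves b : all (fun w => size w == n) (xlev b m).
Proof. by apply/allP => w; rewrite mem_xlev => /andP[]. Qed.

Lemma commg_alpha_ker_sub b : [~: G d, alpha_ker n (lev n)] \subset alpha_ker n (xlev b m).
Proof.
apply: commg_sub_alpha_ker (xlev_leaves b) _ _.
  by apply/subsetP => v; rewrite inE => /andP[].
move=> g f Gg; rewrite leaf_perm_alpha_ker ?lev_leaves //.
rewrite (perm_big _ (perm_lev_xlev m)) big_cat /= => /eqP even.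
have halves : \big[addb/false]_(w <- xlev true m) f w = \big[addb/false]_(w <- xlev false m) f w.
  by apply/esym/eqP; rewrite -negb_add even.
rewrite -(big_map (act g^-1) predT f) (perm_big _ (perm_act_xlev _ (groupVr Gg) _)) //.
by case: (swaps _ _); rewrite ?addbF ?addbT //; case: b; rewrite /= halves.
Qed.

Lemma commg_branch_pair h y : size y = m ->
  leaf_perm n (fun w => (w == h :: y) (+) (w == h :: nseq m false))
    \in [~: G d, [~: G d, Vlev d]].
Proof.
move=> ym.
pose q w := (w == h :: nseq m false) (+) (w == ~~ h :: nseq m false).
have q_in : leaf_perm n q \in [~: G d, Vlev d].
  have -> : leaf_perm n q =
      leaf_perm n (fun w => (w == true :: nseq m false) (+) (w == nseq n false)).
    by apply: eq_leaf_perm => w _; rewrite /q; case: (h); rewrite // addbC.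
  by apply: commg_level_pair; rewrite /= size_nseq.
have branch_G : branch_perm d h y \in G d by exact: flip_perm_in_G.
suff -> : leaf_perm n (fun w => (w == h :: y) (+) (w == h :: nseq m false)) =
          [~ branch_perm d h y, leaf_perm n q].
  exact: mem_commg branch_G q_in.
rewrite commg_leaf_perm //; apply: eq_leaf_perm => w _.
have hh : (~~ h == h) = false by case: (h).
rewrite /q !actV_eq !act_branch_perm ?size_nseq // eqxx hh -{2}ym flip_level_rule.
by rewrite addbACA addbb addbF.
Qed.

Lemma alpha_ker_halves_sub :
  alpha_ker n (xlev false m) :&: alpha_ker n (xlev true m) \subset [~: G d, [~: G d, Vlev d]].
Proof.
apply/subsetP => v; rewrite inE => /andP[v0 v1].
have Vv : v \in Vlev d by move: v0; rewrite inE => /andP[].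
move: v0 v1; rewrite (Vlev_leaf_perm Vv) !leaf_perm_alpha_ker ?xlev_leaves //.
move=> /eqP even0 /eqP even1.
apply: (leaf_perm_in_group (r := fun x => head false x :: nseq m false)) => [[|h y] //= [ym]|w _].
  exact: commg_branch_pair.
have half b : \big[addb/false]_(x <- xlev b m | head false x :: nseq m false == w) alpha_w x v
    = (b :: nseq m false == w) && \big[addb/false]_(x <- xlev b m) alpha_w x v.
  by rewrite !big_map /=; case: eqP => _; rewrite ?big_pred0_eq.
by rewrite (perm_big _ (perm_lev_xlev m)) big_cat !half even0 even1 !andbF.
Qed.

Lemma commg_G_commg_G_VlevE :
  [~: G d, [~: G d, Vlev d]] = alpha_ker n (xlev false m) :&: alpha_ker n (xlev true m).
Proof.
apply/eqP; rewrite eqEsubset alpha_ker_halves_sub andbT.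
by rewrite commg_G_VlevE subsetI !commg_alpha_ker_sub.
Qed.

End SecondDerived.

Theorem mainTheorem14 (d : nat) (hd : 2 <= d) :
  Vder d 1 = [set v in Vlev d | alpha_S (lev d.-1) v == false] /\
  Vder d 2 = [set v in Vlev d | (alpha_S (xlev false (d - 2)) v == false)
                             && (alpha_S (xlev true (d - 2)) v == false)].
Proof.
case: d hd => [|[|m]] // _; split; first exact: commg_G_VlevE.
rewrite [Vder _ 2]/= commg_G_commg_G_VlevE !subSS subn0.
by apply/setP => v; rewrite in_setI !in_set andbACA andbb.
Qed.
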